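(* Let $\pi_0,\pi_1,\dots$ be generated by policy mirror descent (PMD) with step sizes $\eta_t>0$ that are non-decreasing in $t$. Then for every $k\ge1$ and every $s\in\mathcal S$, $$V^{\pi_k}(s)-V^{\pi^*}(s)\le\frac{\sum_{q\in\mathcal S}\kappa^{\pi^*}_s(q)\,\big[\eta_0\big(V^{\pi_0}(q)-V^{\pi^*}(q)\big)+D^{\pi^*}_{\pi_0}(q)\big]}{\eta_0(1-\gamma)k}.$$
   Context: An infinite-horizon discounted MDP: finite state space $\mathcal S$, finite action space $\mathcal A$, transition probabilities $\mathcal P(s'\mid s,a)$, cost $c:\mathcal S\times\mathcal A\to\mathbb R$, discount $\gamma\in[0,1)$. A policy $\pi$ assigns $\pi(\cdot\mid s)\in\Delta_{|\mathcal A|}$ (probability simplex) to each state. Let $\omega$ be a differentiable convex distance-generating function on $\Delta_{|\mathcal A|}$, and for policies $\pi,\pi'$ let $D^{\pi'}_{\pi}(s):=\omega(\pi'(\cdot\mid s))-\omega(\pi(\cdot\mid s))-\langle\nabla\omega(\pi(\cdot\mid s)),\pi'(\cdot\mid s)-\pi(\cdot\mid s)\rangle$ (Bregman distance). For each $s$, $p\mapsto h^p(s)$ is a closed convex function on $\Delta_{|\mathcal A|}$ that is $\mu_h$-strongly convex w.r.t. this Bregman distance for some $\mu_h\ge0$: $h^{p}(s)-h^{p'}(s)-\langle (h')^{p'}(s,\cdot),p-p'\rangle\ge\mu_h[\omega(p)-\omega(p')-\langle\nabla\omega(p'),p-p'\rangle]$ for subgradients $(h')^{p'}(s,\cdot)$.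 $V^\pi(s)=\mathbb E[\sum_{t\ge0}\gamma^t(c(s_t,a_t)+h^{\pi(\cdot\mid s_t)}(s_t))\mid s_0=s,\ a_t\sim\pi(\cdot\mid s_t),\ s_{t+1}\sim\mathcal P(\cdot\mid s_t,a_t)]$, $Q^\pi(s,a)$ the same with $a_0=a$. $\pi^*$ is an optimal policy ($V^{\pi^*}(s)\le V^\pi(s)$ for all $\pi,s$). $\kappa^\pi_s(q):=(1-\gamma)\sum_{t\ge0}\gamma^t\Pr^\pi\{s_t=q\mid s_0=s\}$. PMD: given $\pi_0$ and step sizes $\eta_t$, for all $s$, $\pi_{t+1}(\cdot\mid s)=\operatorname{argmin}_{p\in\Delta_{|\mathcal A|}}\{\eta_t[\langle Q^{\pi_t}(s,\cdot),p\rangle+h^{p}(s)]+\omega(p)-\omega(\pi_t(\cdot\mid s))-\langle\nabla\omega(\pi_t(\cdot\mid s)),p-\pi_t(\cdot\mid s)\rangle\}$. *)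

From HB Require Import structures.
From mathcomp Require Import all_boot all_order all_algebra.
From mathcomp Require Import all_classical all_reals all_analysis.
Set Implicit Arguments. Unset Strict Implicit. Unset Printing Implicit Defensive.
Import Order.TTheory GRing.Theory Num.Theory.
Import numFieldNormedType.Exports.
Local Open Scope classical_set_scope.
Local Open Scope ring_scope.

Section MDP.
Variable R : realType.
Variable S : finType.
Variable nA : nat.             (* action space = 'I_nA *)

Definition simplex (p : 'rV[R]_nA) : Prop :=
  (forall a, 0 <= p ord0 a) /\ \sum_(a < nA) p ord0 a = 1.

Definition inner (u : 'I_nA -> R) (p : 'rV[R]_nA) : R :=
  \sum_(a < nA) u a * p ord0 a.

Definition convex_on_simplex (f : 'rV[R]_nA -> R) : Prop :=
  forall p q, simplex p -> simplex q -> forall t : R, 0 <= t <= 1 ->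
    f (t *: p + (1 - t) *: q) <= t * f p + (1 - t) * f q.

(* closedness (lower semicontinuity relative to the simplex) *)
Definition closed_on_simplex (f : 'rV[R]_nA -> R) : Prop :=
  forall p, simplex p -> forall e : R, 0 < e ->
    \forall q \near p, simplex q -> f p - e < f q.

Definition subgrad_on_simplex (f : 'rV[R]_nA -> R) (p' : 'rV[R]_nA)
  (g : 'I_nA -> R) : Prop :=
  forall p, simplex p -> f p' + inner g (p - p') <= f p.

Definition bregman (omega : 'rV[R]_nA -> R) (p p' : 'rV[R]_nA) : R :=
  omega p - omega p' - 'd omega p' (p - p').

Definition dgf (omega : 'rV[R]_nA -> R) : Prop :=
  (forall p, simplex p -> differentiable omega p) /\ convex_on_simplex omega.

Definition reg_ok (omega : 'rV[R]_nA -> R) (h : S -> 'rV[R]_nA -> R) (muh : R) : Prop :=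
  0 <= muh /\
  forall s, convex_on_simplex (h s) /\ closed_on_simplex (h s) /\
    forall p p' g, simplex p -> simplex p' -> subgrad_on_simplex (h s) p' g ->
      h s p - h s p' - inner g (p - p') >= muh * bregman omega p p'.

Definition rseries (u : nat -> R) : R := limn (fun n => \sum_(0 <= t < n) u t).

Definition policy := S -> 'rV[R]_nA.
Definition is_policy (pi : policy) : Prop := forall s, simplex (pi s).

Definition is_mdp (P : S -> 'I_nA -> S -> R) (gamma : R) : Prop :=
  (forall s a s', 0 <= P s a s') /\ (forall s a, \sum_(s' : S) P s a s' = 1) /\
  0 <= gamma < 1.

Variables (P : S -> 'I_nA -> S -> R) (c : S -> 'I_nA -> R)
          (h : S -> 'rV[R]_nA -> R) (gamma : R).

Definition Ppi (pi : policy) (s q : S) : R :=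
  \sum_(a < nA) pi s ord0 a * P s a q.

(* Pr^pi { s_t = q | s_0 = s } *)
Fixpoint Pt (pi : policy) (t : nat) (s q : S) : R :=
  match t with
  | O => if s == q then 1 else 0
  | t'.+1 => \sum_(r : S) Pt pi t' s r * Ppi pi r q
  end.

Definition cpi (pi : policy) (q : S) : R :=
  \sum_(a < nA) pi q ord0 a * c q a + h q (pi q).

Definition V (pi : policy) (s : S) : R :=
  rseries (fun t => gamma ^+ t * \sum_(q : S) Pt pi t s q * cpi pi q).

(* same expectation with a_0 = a *)
Definition Q (pi : policy) (s : S) (a : 'I_nA) : R :=
  rseries (fun t =>
    match t with
     | O => c s a + h s (pi s)
     | t'.+1 => gamma ^+ t *
         \sum_(s' : S) P s a s' * \sum_(q : S) Pt pi t' s' q * cpi pi q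
     end).

Definition kappa (pi : policy) (s q : S) : R :=
  (1 - gamma) * rseries (fun t => gamma ^+ t * Pt pi t s q).

Definition optimal (pistar : policy) : Prop :=
  is_policy pistar /\ forall pi, is_policy pi -> forall s, V pistar s <= V pi s.

Definition pmd_obj (omega : 'rV[R]_nA -> R) (eta : R) (pi : policy) (s : S)
  (p : 'rV[R]_nA) : R :=
  eta * (inner (Q pi s) p + h s p) + bregman omega p (pi s).

Definition is_pmd (omega : 'rV[R]_nA -> R) (eta : nat -> R) (pis : nat -> policy) : Prop :=
  is_policy (pis 0%N) /\
  forall t s, simplex (pis t.+1 s) /\
    forall p, simplex p -> pmd_obj omega (eta t) (pis t) s (pis t.+1 s)
                         <= pmd_obj omega (eta t) (pis t) s p.

End MDP.

(* Values are discounted sums along the Markov chain of a policy, i.e. the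
   unique fixed points of gamma-contractive Bellman equations.  Uniqueness gives
   the performance-difference lemma
     (1 - gamma) (V^pi'(s) - V^pi(s)) = sum_q kappa^pi'_s(q) psi(q),
   with the advantage psi(q) = <Q^pi(q,.), pi'(q)> + h^pi'(q) - h^pi(q) - V^pi(q).
   The three-point lemma for the mirror step, tested at pi_t(q) and at pi*(q),
   shows that the advantage of pi_{t+1} over pi_t is nonpositive (so V^pi_t
   decreases) and that eta_t times its excess over the advantage of pi* is at
   most D_t(q) - D_{t+1}(q), with D_t = D^pi*_pi_t.  Averaging against
   kappa^pi*_s and summing over t < k, the Bregman terms telescope because
   eta_t is nondecreasing, and monotonicity turns the k gaps into k times the
   last one. *)

From HB Require Import structures.
From mathcomp Require Import all_boot all_order all_algebra.
From mathcomp Require Import all_classical all_reals all_analysis.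
From mathcomp Require Import ring lra.
Import Order.TTheory GRing.Theory Num.Theory.
Import numFieldNormedType.Exports.
Set Implicit Arguments. Unset Strict Implicit. Unset Printing Implicit Defensive.
Local Open Scope classical_set_scope.
Local Open Scope ring_scope.

Lemma telescope_div_le (R : realFieldType) (d eta : nat -> R) :
  (forall t, 0 <= d t) -> (forall t, 0 < eta t) -> (forall t, eta t <= eta t.+1) ->
  forall k, \sum_(0 <= t < k) (d t - d t.+1) / eta t + d k / eta k <= d 0%N / eta 0%N.
Proof.
move=> d_ge0 eta_gt0 eta_le; elim=> [|k IH]; first by rewrite big_geq // add0r.
apply: le_trans IH; rewrite big_nat_recr //= -addrA lerD2l mulrBl -addrA gerDl addrC subr_le0.
by rewrite ler_wpM2l // lef_pV2 ?posrE.
Qed.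

Lemma nonincreasing_mul_le_sum (R : realDomainType) (u : nat -> R) :
  nonincreasing_seq u -> forall k, k%:R * u k <= \sum_(0 <= t < k) u t.
Proof.
move=> u_noninc k; rewrite mulr_natl -[k in _ *+ k](subn0 k) -sumr_const_nat.
by apply: ler_sum_nat => t /andP[_ /ltnW t_le_k]; apply: u_noninc.
Qed.

Section DiscountedFixpoint.
Variables (R : realFieldType) (S : finType) (M : S -> S -> R) (gamma : R).
Hypotheses (M_ge0 : forall s r, 0 <= M s r) (M_sum1 : forall s, \sum_r M s r = 1).
Hypotheses (gamma_ge0 : 0 <= gamma) (gamma_lt1 : gamma < 1).

Lemma subsolution_le0 (A X : S -> R) :
  (forall s, A s <= 0) -> (forall s, X s <= A s + gamma * \sum_r M s r * X r) ->
  forall s, X s <= 0.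
Proof.
(* At a maximiser s0 of X the M-average of X is at most X s0. *)
move=> A_le0 subX s; have [s0 _ X_max] := @arg_maxP _ R S s predT X isT.
suff : X s0 <= 0 by apply: le_trans (X_max s isT).
have avg_le : \sum_r M s0 r * X r <= X s0.
  rewrite -[leRHS]mul1r -(M_sum1 s0) mulr_suml; apply: ler_sum => r _.
  by apply: ler_wpM2l => //; apply: X_max.
have := subX s0; have := A_le0 s0.
have : gamma * \sum_r M s0 r * X r <= gamma * X s0 by apply: ler_wpM2l.
have := gamma_lt1; nra.
Qed.

Lemma fixpoint_unique (A X Y : S -> R) :
  (forall s, X s = A s + gamma * \sum_r M s r * X r) ->
  (forall s, Y s = A s + gamma * \sum_r M s r * Y r) ->
  X =1 Y.
Proof.
suff le_fix (X' Y' : S -> R) : (forall s, X' s = A s + gamma * \sum_r M s r * X' r) ->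
    (forall s, Y' s = A s + gamma * \sum_r M s r * Y' r) -> forall s, X' s <= Y' s.
  by move=> fixX fixY s; apply/eqP; rewrite eq_le !le_fix.
move=> fixX fixY s; rewrite -subr_le0.
apply: (@subsolution_le0 (fun=> 0) (fun s => X' s - Y' s)) => // {}s.
rewrite add0r (eq_bigr (fun r => M s r * X' r - M s r * Y' r)) => [|r _]; last by rewrite mulrBr.
rewrite sumrB {1}fixX {1}fixY; lra.
Qed.

End DiscountedFixpoint.

Section MarkovChain.
Variables (R : realType) (S : finType) (nA : nat) (P : S -> 'I_nA -> S -> R).
Variable pi : policy R S nA.

Lemma sum_Pt0 (f : S -> R) s : \sum_q Pt P pi 0 s q * f q = f s.
Proof.
rewrite (bigD1 s) //= eqxx mul1r big1 ?addr0 // => q.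
by rewrite eq_sym => /negbTE ->; rewrite mul0r.
Qed.

Lemma Pt_recl t s q : Pt P pi t.+1 s q = \sum_r Ppi P pi s r * Pt P pi t r q.
Proof.
elim: t s q => [|t IH] s q.
  rewrite [LHS]sum_Pt0 (bigD1 q) //= eqxx mulr1 big1 ?addr0 // => r /negbTE r_neq.
  by rewrite r_neq mulr0.
rewrite -[LHS]/(\sum_r Pt P pi t.+1 s r * Ppi P pi r q).
rewrite (eq_bigr (fun r => \sum_u Ppi P pi s u * Pt P pi t u r * Ppi P pi r q)) => [|r _].
  rewrite exchange_big; apply: eq_bigr => u _ /=.
  by rewrite mulr_sumr; apply: eq_bigr => r _; rewrite mulrA.
by rewrite IH mulr_suml.
Qed.

Lemma sum_PpiE (f : S -> R) s :
  \sum_r Ppi P pi s r * f r = \sum_a pi s ord0 a * \sum_r P s a r * f r.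
Proof.
under eq_bigr do rewrite mulr_suml.
rewrite exchange_big; apply: eq_bigr => a _ /=.
by rewrite mulr_sumr; apply: eq_bigr => r _; rewrite mulrA.
Qed.

Hypotheses (P_ge0 : forall s a s', 0 <= P s a s') (P_sum1 : forall s a, \sum_s' P s a s' = 1).
Hypothesis pi_policy : is_policy pi.

Lemma Ppi_ge0 s q : 0 <= Ppi P pi s q.
Proof. by apply: sumr_ge0 => a _; apply: mulr_ge0 => //; case: (pi_policy s). Qed.

Lemma Ppi_sum1 s : \sum_q Ppi P pi s q = 1.
Proof.
rewrite exchange_big /= -(proj2 (pi_policy s)); apply: eq_bigr => a _.
by rewrite -mulr_sumr P_sum1 mulr1.
Qed.

Lemma Pt_ge0 t s q : 0 <= Pt P pi t s q.
Proof.
elim: t s q => [|t IH] s q /=; first by case: eqP.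
by apply: sumr_ge0 => r _; rewrite mulr_ge0 ?Ppi_ge0.
Qed.

Lemma Pt_sum1 t s : \sum_q Pt P pi t s q = 1.
Proof.
elim: t s => [|t IH] s.
  by rewrite -[RHS](sum_Pt0 (fun=> 1) s); apply: eq_bigr => q _; rewrite mulr1.
rewrite exchange_big /= -[RHS](IH s); apply: eq_bigr => r _.
by rewrite -mulr_sumr Ppi_sum1 mulr1.
Qed.

Lemma Pt_le1 t s q : Pt P pi t s q <= 1.
Proof.
rewrite -(Pt_sum1 t s) (bigD1 q) //= lerDl.
by apply: sumr_ge0 => r _; apply: Pt_ge0.
Qed.

End MarkovChain.

Section DiscountedValue.
Variables (R : realType) (S : finType) (nA : nat) (P : S -> 'I_nA -> S -> R) (gamma : R).
Hypotheses (P_ge0 : forall s a s', 0 <= P s a s') (P_sum1 : forall s a, \sum_s' P s a s' = 1).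
Hypotheses (gamma_ge0 : 0 <= gamma) (gamma_lt1 : gamma < 1).
Variable pi : policy R S nA.
Hypothesis pi_policy : is_policy pi.

Definition disc_term (f : S -> R) s t := gamma ^+ t * \sum_q Pt P pi t s q * f q.

Definition disc_value (f : S -> R) s := limn (series (disc_term f s)).

Lemma disc_termS f s t :
  disc_term f s t.+1 = gamma * \sum_r Ppi P pi s r * disc_term f r t.
Proof.
rewrite /disc_term exprS -mulrA; congr (_ * _).
under [RHS]eq_bigr do rewrite mulrCA.
rewrite -mulr_sumr; congr (_ * _).
under eq_bigr do rewrite Pt_recl mulr_suml.
rewrite exchange_big; apply: eq_bigr => r _ /=.
by rewrite mulr_sumr; apply: eq_bigr => q _; rewrite mulrA.
Qed.

Lemma disc_seriesS f s n :
  series (disc_term f s) n.+1 = f s + gamma * \sum_r Ppi P pi s r * series (disc_term f r) n.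
Proof.
rewrite /series /= big_nat_recl // {1}/disc_term expr0 mul1r sum_Pt0; congr (_ + _).
under eq_bigr do rewrite disc_termS.
rewrite -mulr_sumr exchange_big; congr (_ * _).
by apply: eq_bigr => r _; rewrite mulr_sumr.
Qed.

Lemma disc_series_cvg f s : cvgn (series (disc_term f s)).
Proof.
apply: normed_cvg; pose K := \sum_q `|f q|.
apply: (@series_le_cvg _ _ (geometric K gamma)) => [n|n|n|].
- exact: normr_ge0.
- by rewrite /geometric /= mulr_ge0 ?exprn_ge0 ?sumr_ge0.
- rewrite /geometric /= /disc_term normrM ger0_norm ?exprn_ge0 // mulrC.
  apply: ler_wpM2r; first exact: exprn_ge0.
  apply: le_trans (ler_norm_sum _ _ _) _; apply: ler_sum => q _.
  rewrite normrM ger0_norm ?Pt_ge0 // -[leRHS]mul1r.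
  by apply: ler_wpM2r; [exact: normr_ge0 | exact: Pt_le1].
- by apply: is_cvg_geometric_series; rewrite ger0_norm.
Qed.

Lemma disc_value_fix f s :
  disc_value f s = f s + gamma * \sum_r Ppi P pi s r * disc_value f r.
Proof.
apply: cvg_lim => //; rewrite -cvg_shiftS /=.
under eq_fun do rewrite disc_seriesS.
apply: cvgD; first exact: cvg_cst.
apply: cvgMl_tmp; apply: cvg_big => // [|r _]; first exact: add_continuous.
by apply: cvgMl_tmp; apply: disc_series_cvg.
Qed.

Lemma disc_value_unique A X :
  (forall s, X s = A s + gamma * \sum_r Ppi P pi s r * X r) -> X =1 disc_value A.
Proof.
move=> fixX; apply: (fixpoint_unique _ _ gamma_ge0 gamma_lt1 fixX) => [||s].
- exact: Ppi_ge0.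
- exact: Ppi_sum1.
- exact: disc_value_fix.
Qed.

Lemma disc_value_le0 A : (forall q, A q <= 0) -> forall s, disc_value A s <= 0.
Proof.
move=> A_le0; apply: (subsolution_le0 _ _ gamma_ge0 gamma_lt1 A_le0) => [||s].
- exact: Ppi_ge0.
- exact: Ppi_sum1.
- by rewrite [X in X <= _]disc_value_fix.
Qed.

Lemma occupancy_cvg s q : cvgn (series (fun t => gamma ^+ t * Pt P pi t s q)).
Proof.
apply: (@series_le_cvg _ _ (geometric 1 gamma)) => [t|t|t|].
- by rewrite mulr_ge0 ?exprn_ge0 ?Pt_ge0.
- by rewrite /geometric /= mul1r exprn_ge0.
- by rewrite /geometric /= mul1r ler_piMr ?exprn_ge0 ?Pt_le1.
- by apply: is_cvg_geometric_series; rewrite ger0_norm.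
Qed.

Lemma kappa_ge0 s q : 0 <= kappa P gamma pi s q.
Proof.
rewrite /kappa mulr_ge0 //; first by rewrite subr_ge0 ltW.
apply: limr_ge; first exact: occupancy_cvg.
apply: nearW => n.
by apply: sumr_ge0 => t _; rewrite mulr_ge0 ?exprn_ge0 ?Pt_ge0.
Qed.

Lemma kappa_sum A s :
  \sum_q kappa P gamma pi s q * A q = (1 - gamma) * disc_value A s.
Proof.
under eq_bigr do rewrite -mulrA; rewrite -mulr_sumr; congr (_ * _).
apply/esym/cvg_lim => //.
have -> : series (disc_term A s) =
    (fun n => \sum_q series (fun t => gamma ^+ t * Pt P pi t s q) n * A q).
  apply/funext => n; rewrite /series /disc_term /=.
  under eq_bigr do rewrite mulr_sumr.
  rewrite exchange_big; apply: eq_bigr => q _.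
  by rewrite mulr_suml; apply: eq_bigr => t _; rewrite mulrA.
apply: cvg_big => // [|q _]; first exact: add_continuous.
by apply: cvgMr_tmp; apply: occupancy_cvg.
Qed.

End DiscountedValue.

Section PerformanceDifference.
Variables (R : realType) (S : finType) (nA : nat).
Variables (P : S -> 'I_nA -> S -> R) (c : S -> 'I_nA -> R) (h : S -> 'rV[R]_nA -> R).
Variable gamma : R.
Hypotheses (P_ge0 : forall s a s', 0 <= P s a s') (P_sum1 : forall s a, \sum_s' P s a s' = 1).
Hypotheses (gamma_ge0 : 0 <= gamma) (gamma_lt1 : gamma < 1).

Local Notation V := (V P c h gamma).
Local Notation Q := (Q P c h gamma).

Lemma V_bellman pi : is_policy pi ->
  forall s, V pi s = cpi c h pi s + gamma * \sum_r Ppi P pi s r * V pi r.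
Proof. by move=> pi_policy s; apply: disc_value_fix. Qed.

Lemma Q_bellman pi : is_policy pi ->
  forall s a, Q pi s a = c s a + h s (pi s) + gamma * \sum_r P s a r * V pi r.
Proof.
move=> pi_policy s a.
have termS t : gamma ^+ t.+1 * \sum_r P s a r * \sum_q Pt P pi t r q * cpi c h pi q =
    gamma * \sum_r P s a r * disc_term P gamma pi (cpi c h pi) r t.
  by rewrite exprS -mulrA mulr_sumr; congr (_ * _); apply: eq_bigr => r _; rewrite mulrCA.
apply: cvg_lim => //; rewrite -cvg_shiftS /=.
under eq_fun => n do
  rewrite big_nat_recl //= (eq_bigr _ (fun t _ => termS t)) -mulr_sumr exchange_big /=.
apply: cvgD; first exact: cvg_cst.
apply: cvgMl_tmp; apply: cvg_big => // [|r _]; first exact: add_continuous.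
under eq_fun do rewrite -mulr_sumr.
by apply: cvgMl_tmp; apply: disc_series_cvg.
Qed.

Definition advantage (pi' pi : policy R S nA) q :=
  cpi c h pi' q + gamma * \sum_r Ppi P pi' q r * V pi r - V pi q.

Lemma advantage_self pi : is_policy pi -> forall q, advantage pi pi q = 0.
Proof. by move=> pi_policy q; rewrite /advantage -V_bellman ?subrr. Qed.

Lemma inner_QE pi' pi : is_policy pi' -> is_policy pi -> forall q,
  inner (Q pi q) (pi' q) + h q (pi' q) = advantage pi' pi q + V pi q + h q (pi q).
Proof.
move=> pi'_policy pi_policy q; have [_ pi'_sum1] := pi'_policy q.
rewrite /inner (eq_bigr (fun a => pi' q ord0 a * c q a + pi' q ord0 a * h q (pi q) +
    gamma * (pi' q ord0 a * \sum_r P q a r * V pi r))) => [|a _]; last first.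
  by rewrite Q_bellman //; ring.
rewrite !big_split /= -mulr_sumr -mulr_suml pi'_sum1 mul1r /advantage /cpi sum_PpiE.
ring.
Qed.

Lemma perf_diff pi' pi : is_policy pi' -> is_policy pi ->
  forall s, V pi' s - V pi s = disc_value P gamma pi' (advantage pi' pi) s.
Proof.
move=> pi'_policy pi_policy; apply: disc_value_unique => // s.
rewrite (eq_bigr (fun r => Ppi P pi' s r * V pi' r - Ppi P pi' s r * V pi r)) => [|r _].
  by rewrite sumrB /advantage {1}(V_bellman pi'_policy s); ring.
by rewrite mulrBr.
Qed.

Lemma perf_diff_kappa pi' pi : is_policy pi' -> is_policy pi -> forall s,
  \sum_q kappa P gamma pi' s q * advantage pi' pi q = (1 - gamma) * (V pi' s - V pi s).
Proof. by move=> pi'_policy pi_policy s; rewrite kappa_sum // perf_diff. Qed.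

Lemma perf_diff_le_advantage pi' pi : is_policy pi' -> is_policy pi ->
  (forall q, advantage pi' pi q <= 0) ->
  forall s, V pi' s - V pi s <= advantage pi' pi s.
Proof.
move=> pi'_policy pi_policy adv_le0 s.
rewrite perf_diff // disc_value_fix // gerDl mulr_ge0_le0 //.
apply: sumr_le0 => r _; rewrite mulr_ge0_le0 ?Ppi_ge0 //.
exact: disc_value_le0.
Qed.

End PerformanceDifference.

Section BregmanGeometry.
Variables (R : realType) (nA : nat).
Implicit Types (p q x y v : 'rV[R]_nA) (f : 'rV[R]_nA -> R).

Lemma segmentE x y (l : R) : l *: (y - x) + x = l *: y + (1 - l) *: x.
Proof. by apply/matrixP => i j; rewrite !mxE; ring. Qed.

Lemma simplex_convex p q (t : R) :
  simplex p -> simplex q -> 0 <= t <= 1 -> simplex (t *: p + (1 - t) *: q).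
Proof.
move=> [p_ge0 p_sum1] [q_ge0 q_sum1] /andP[t_ge0 t_le1]; split=> [a|].
  by rewrite !mxE addr_ge0 // mulr_ge0 // subr_ge0.
rewrite (eq_bigr (fun a => t * p ord0 a + (1 - t) * q ord0 a)) => [|a _]; last by rewrite !mxE.
by rewrite big_split /= -!mulr_sumr p_sum1 q_sum1 !mulr1 subrKC.
Qed.

Lemma inner_convex (u : 'I_nA -> R) p q (t : R) :
  inner u (t *: p + (1 - t) *: q) = t * inner u p + (1 - t) * inner u q.
Proof.
rewrite /inner !mulr_sumr -big_split; apply: eq_bigr => a _ /=.
by rewrite !mxE; ring.
Qed.

Lemma convex_on_simplex_inner_add (u : 'I_nA -> R) f (e : R) :
  0 <= e -> convex_on_simplex f -> convex_on_simplex (fun p => e * (inner u p + f p)).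
Proof.
move=> e_ge0 f_convex p q p_simplex q_simplex t t01; rewrite inner_convex.
have f_le := f_convex p q p_simplex q_simplex t t01.
have : e * f (t *: p + (1 - t) *: q) <= e * (t * f p + (1 - t) * f q) by rewrite ler_wpM2l.
lra.
Qed.

Variable omega : 'rV[R]_nA -> R.

Lemma diff_quotient_cvg x v : differentiable omega x ->
  (fun l : R => l^-1 * (omega (l *: v + x) - omega x)) @ 0^'+ --> 'd omega x v.
Proof.
move=> omega_diff; rewrite -(deriveE v omega_diff).
exact/cvg_dnbhs_at_right/diff_derivable.
Qed.

Lemma le_diff_of_quotient x v (C : R) : differentiable omega x ->
  (forall l : R, 0 < l <= 1 -> C <= l^-1 * (omega (l *: v + x) - omega x)) ->
  C <= 'd omega x v.
Proof.
move=> omega_diff C_le; have quotient_cvg := diff_quotient_cvg (v := v) omega_diff.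
rewrite -(cvg_lim _ quotient_cvg) //; apply: limr_ge; first exact: cvgP quotient_cvg.
near=> l; apply: C_le; apply/andP; split; first by near: l; apply: nbhs_right_gt.
by near: l; apply: nbhs_right_le.
Unshelve. all: by end_near.
Qed.

Lemma diff_le_of_quotient x v (C : R) : differentiable omega x ->
  (forall l : R, 0 < l <= 1 -> l^-1 * (omega (l *: v + x) - omega x) <= C) ->
  'd omega x v <= C.
Proof.
move=> omega_diff le_C; have quotient_cvg := diff_quotient_cvg (v := v) omega_diff.
rewrite -(cvg_lim _ quotient_cvg) //; apply: limr_le; first exact: cvgP quotient_cvg.
near=> l; apply: le_C; apply/andP; split; first by near: l; apply: nbhs_right_gt.
by near: l; apply: nbhs_right_le.
Unshelve. all: by end_near.
Qed.

Lemma bregmanxx x : bregman omega x x = 0.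
Proof. by rewrite /bregman !subrr linear0 subr0. Qed.

Hypothesis omega_diff : forall p, simplex p -> differentiable omega p.

Lemma bregman_ge0 x y : convex_on_simplex omega -> simplex x -> simplex y ->
  0 <= bregman omega y x.
Proof.
move=> omega_convex x_simplex y_simplex; rewrite /bregman subr_ge0.
apply: diff_le_of_quotient (omega_diff x_simplex) _ => l /andP[l_gt0 l_le1].
rewrite segmentE ler_pdivrMl //.
have := omega_convex y x y_simplex x_simplex l; rewrite (ltW l_gt0) l_le1 => /(_ isT).
lra.
Qed.

Lemma three_point (phi : 'rV[R]_nA -> R) pt pp :
  convex_on_simplex phi -> simplex pt -> simplex pp ->
  (forall p, simplex p -> phi pp + bregman omega pp pt <= phi p + bregman omega p pt) ->
  forall p, simplex p ->
  phi pp + bregman omega pp pt + bregman omega p pp <= phi p + bregman omega p pt.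
Proof.
move=> phi_convex pt_simplex pp_simplex pp_min p p_simplex.
(* First-order optimality of pp along the segment towards p. *)
have key : phi pp - phi p + 'd omega pt (p - pp) <= 'd omega pp (p - pp).
  apply: le_diff_of_quotient (omega_diff pp_simplex) _ => l /andP[l_gt0 l_le1].
  have l01 : 0 <= l <= 1 by rewrite ltW.
  have pl_simplex : simplex (l *: (p - pp) + pp) by rewrite segmentE; apply: simplex_convex.
  have conv : phi (l *: (p - pp) + pp) <= l * phi p + (1 - l) * phi pp.
    by rewrite segmentE phi_convex.
  have lin : 'd omega pt (l *: (p - pp) + pp - pt) - 'd omega pt (pp - pt) =
      l * 'd omega pt (p - pp).
    by rewrite -linearB -linearZ /= opprB addrA subrK addrK.
  move: (pp_min _ pl_simplex) conv lin; rewrite ler_pdivlMl // /bregman.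
  (* The differentials are abstracted at type [R]: [lra] does not recognise their
     codomain as [R]. *)
  move: (phi (l *: _ + _)) (omega (l *: _ + _)) ('d omega pt (l *: _ + _ - _) : R).
  move: ('d omega pt (p - pp) : R) ('d omega pt (pp - pt) : R) => *; lra.
have lin : 'd omega pt (p - pt) - 'd omega pt (pp - pt) = 'd omega pt (p - pp).
  by rewrite -linearB /= opprB addrA subrK.
move: key lin; rewrite /bregman.
(* [generalize] matches syntactically; [move:] would try to unfold matrix arithmetic. *)
generalize ('d omega pt (p - pp) : R) ('d omega pt (pp - pt) : R) ('d omega pt (p - pt) : R)
  ('d omega pp (p - pp) : R) => *; lra.
Qed.

End BregmanGeometry.

Section PolicyMirrorDescent.
Variables (R : realType) (S : finType) (nA : nat).
Variables (P : S -> 'I_nA -> S -> R) (c : S -> 'I_nA -> R) (h : S -> 'rV[R]_nA -> R).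
Variables (gamma : R) (omega : 'rV[R]_nA -> R).
Variables (pistar : policy R S nA) (eta : nat -> R) (pis : nat -> policy R S nA).
Hypotheses (P_ge0 : forall s a s', 0 <= P s a s') (P_sum1 : forall s a, \sum_s' P s a s' = 1).
Hypotheses (gamma_ge0 : 0 <= gamma) (gamma_lt1 : gamma < 1).
Hypotheses (omega_diff : forall p, simplex p -> differentiable omega p)
  (omega_convex : convex_on_simplex omega).
Hypothesis h_convex : forall s, convex_on_simplex (h s).
Hypotheses (pistar_policy : is_policy pistar)
  (pistar_opt : forall pi, is_policy pi -> forall s, V P c h gamma pistar s <= V P c h gamma pi s).
Hypotheses (eta_gt0 : forall t, 0 < eta t) (eta_le : forall t, eta t <= eta t.+1).
Hypothesis pmd : is_pmd P c h gamma omega eta pis.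

Local Notation V := (V P c h gamma).
Local Notation adv := (advantage P c h gamma).
Local Notation D t q := (bregman omega (pistar q) (pis t q)).

Lemma pmd_policy t : is_policy (pis t).
Proof. by case: t => [|t] q; [apply: pmd.1 | case: (pmd.2 t q)]. Qed.

Lemma pmd_three_point t q p : simplex p ->
  pmd_obj P c h gamma omega (eta t) (pis t) q (pis t.+1 q) + bregman omega p (pis t.+1 q)
  <= pmd_obj P c h gamma omega (eta t) (pis t) q p.
Proof.
have [pis_simplex pis_min] := pmd.2 t q.
pose phi p := eta t * (inner (Q P c h gamma (pis t) q) p + h q p).
apply: (three_point omega_diff (phi := phi)) => //; last exact: pmd_policy.
by apply: convex_on_simplex_inner_add; [exact: ltW | exact: h_convex].
Qed.

Lemma pmd_advantage_le0 t q : adv (pis t.+1) (pis t) q <= 0.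
Proof.
have := pmd_three_point t q (pmd_policy t q); rewrite /pmd_obj.
rewrite !inner_QE ?advantage_self //; try exact: pmd_policy.
rewrite bregmanxx -(pmulr_rle0 _ (eta_gt0 t)).
have := bregman_ge0 omega_diff omega_convex (pmd_policy t q) (pmd_policy t.+1 q).
have := bregman_ge0 omega_diff omega_convex (pmd_policy t.+1 q) (pmd_policy t q).
lra.
Qed.

Lemma pmd_advantage_gap t q :
  eta t * (adv (pis t.+1) (pis t) q - adv pistar (pis t) q) <= D t q - D t.+1 q.
Proof.
have := pmd_three_point t q (pistar_policy q); rewrite /pmd_obj.
rewrite !inner_QE //; try exact: pmd_policy.
have := bregman_ge0 omega_diff omega_convex (pmd_policy t q) (pmd_policy t.+1 q).
lra.
Qed.

Lemma pmd_V_step t q : V (pis t.+1) q - V (pis t) q <= adv (pis t.+1) (pis t) q.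
Proof.
apply: perf_diff_le_advantage => //; try exact: pmd_policy.
exact: pmd_advantage_le0.
Qed.

Lemma pmd_V_nonincreasing q : nonincreasing_seq (fun t => V (pis t) q).
Proof.
apply/nonincreasing_seqP => t.
by rewrite -subr_le0; apply: le_trans (pmd_V_step t q) (pmd_advantage_le0 t q).
Qed.

Variable s : S.

Local Notation kap := (kappa P gamma pistar s).

Lemma pmd_step_bound t :
  \sum_q kap q * V (pis t.+1) q - \sum_q kap q * V (pis t) q
    + (1 - gamma) * (V (pis t) s - V pistar s)
  <= (\sum_q kap q * D t q - \sum_q kap q * D t.+1 q) / eta t.
Proof.
have per_state q : V (pis t.+1) q - V (pis t) q - adv pistar (pis t) q
    <= (D t q - D t.+1 q) / eta t.
  apply: le_trans (_ : adv (pis t.+1) (pis t) q - adv pistar (pis t) q <= _).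
    by rewrite lerD2r pmd_V_step.
  by rewrite ler_pdivlMr // mulrC pmd_advantage_gap.
have -> : (1 - gamma) * (V (pis t) s - V pistar s) = - \sum_q kap q * adv pistar (pis t) q.
  rewrite perf_diff_kappa //; last exact: pmd_policy.
  by rewrite -mulrN opprB.
rewrite -!sumrB mulr_suml; apply: ler_sum => q _.
rewrite -!mulrBr -[leRHS]mulrA; apply: ler_wpM2l; [exact: kappa_ge0 | exact: per_state].
Qed.

Lemma pmd_cumulative_bound k :
  \sum_q kap q * V (pis k) q - \sum_q kap q * V (pis 0%N) q
    + (1 - gamma) * \sum_(0 <= t < k) (V (pis t) s - V pistar s)
  <= (\sum_q kap q * D 0%N q) / eta 0%N.
Proof.
have d_ge0 t : 0 <= \sum_q kap q * D t q.
  apply: sumr_ge0 => q _; apply: mulr_ge0; first exact: kappa_ge0.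
  exact: (bregman_ge0 omega_diff omega_convex (pmd_policy t q) (pistar_policy q)).
have := @ler_sum_nat _ 0 k _ _ (fun t _ => pmd_step_bound t).
rewrite big_split /= telescope_sumr // -mulr_sumr => /le_trans; apply.
apply: le_trans (telescope_div_le d_ge0 eta_gt0 eta_le k).
by rewrite lerDl divr_ge0 // ltW.
Qed.

Lemma pmd_rate k :
  (1 - gamma) * k%:R * (V (pis k) s - V pistar s)
  <= \sum_q kap q * (V (pis 0%N) q - V pistar q + D 0%N q / eta 0%N).
Proof.
have avg : k%:R * (V (pis k) s - V pistar s) <= \sum_(0 <= t < k) (V (pis t) s - V pistar s).
  apply: (@nonincreasing_mul_le_sum _ (fun t => V (pis t) s - V pistar s)) => m n mn /=.
  by rewrite lerD2r; apply: pmd_V_nonincreasing.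
have opt : \sum_q kap q * V pistar q <= \sum_q kap q * V (pis k) q.
  apply: ler_sum => q _; apply: ler_wpM2l; first exact: kappa_ge0.
  exact: (pistar_opt (pmd_policy k)).
have gamma_avg : (1 - gamma) * (k%:R * (V (pis k) s - V pistar s))
    <= (1 - gamma) * \sum_(0 <= t < k) (V (pis t) s - V pistar s).
  by apply: ler_wpM2l avg; rewrite subr_ge0 ltW.
have cum := pmd_cumulative_bound k.
rewrite (eq_bigr (fun q =>
    kap q * V (pis 0%N) q - kap q * V pistar q + kap q * D 0%N q / eta 0%N)) => [|q _].
  by rewrite big_split sumrB -mulr_suml /= -mulrA; lra.
by rewrite mulrDr mulrBr mulrA.
Qed.

End PolicyMirrorDescent.

Unset Implicit Arguments.

Theorem theorem3p3 (R : realType) (S : finType) (nA : nat)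
  (P : S -> 'I_nA -> S -> R) (c : S -> 'I_nA -> R)
  (h : S -> 'rV[R]_nA -> R) (gamma : R)
  (omega : 'rV[R]_nA -> R) (muh : R)
  (pistar : policy R S nA) (eta : nat -> R) (pis : nat -> policy R S nA) :
  is_mdp P gamma ->
  dgf omega ->
  reg_ok omega h muh ->
  optimal P c h gamma pistar ->
  (forall t, 0 < eta t) ->
  (forall t, eta t <= eta t.+1) ->
  is_pmd P c h gamma omega eta pis ->
  forall (k : nat) (s : S), (1 <= k)%N ->
    V P c h gamma (pis k) s - V P c h gamma pistar s <=
      (\sum_(q : S) kappa P gamma pistar s q *
          (eta 0%N * (V P c h gamma (pis 0%N) q - V P c h gamma pistar q)
           + bregman omega (pistar q) (pis 0%N q)))
      / (eta 0%N * (1 - gamma) * k%:R).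
Proof.
move=> [P_ge0 [P_sum1 /andP[gamma_ge0 gamma_lt1]]] [omega_diff omega_convex] [_ h_reg]
  [pistar_policy pistar_opt] eta_gt0 eta_le pmd k s k_ge1.
have h_convex q : convex_on_simplex (h q) by case: (h_reg q).
have eta0_gt0 := eta_gt0 0%N.
rewrite ler_pdivlMr; last by rewrite !mulr_gt0 ?subr_gt0 ?ltr0n.
rewrite (eq_bigr (fun q => eta 0%N * (kappa P gamma pistar s q *
    (V P c h gamma (pis 0%N) q - V P c h gamma pistar q
     + bregman omega (pistar q) (pis 0%N q) / eta 0%N)))) => [|q _]; last first.
  by field; rewrite gt_eqF.
rewrite -mulr_sumr mulrC -!mulrA ler_pM2l // mulrA.
exact: pmd_rate.
Qed.
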